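(* Consider the version of the jelly–labour model with money described in the context, with constant total amount of money $M=m^{(H)}_t+m^{(F)}_t$. Let the economic-equilibrium labour be $L_E=\frac{\beta}{\alpha+\beta}L_f$. If $M<L_E$ initially, then the economic equilibrium can never be reached.
   Context: Model (version with money as a pure store of value). There are an aggregate household and an aggregate firm, and two goods: labour (the numéraire, wage $w=1$; one unit of money equals one unit of labour in value) and jelly. Parameters: $\alpha,\beta>0$, $0<\gamma<1$, labour force $L_f>0$. The household has utility $(L_f-L)^\alpha J^\beta$ and the firm has production function $J=L^\gamma$ and expected demand function $\phi_t(J)=z_t/J^{\zeta_t}$. The money holdings at time $t$ are $m^{(H)}_t,m^{(F)}_t\ge0$. One period $t\to t+1$ proceeds as follows. (1) The firm chooses labour demand $L^{(D)}_{t+1}=\arg\min_L|L^\gamma\phi_t(L^\gamma)-L|$ subject to $0\le L\le L_f$ and $L\le m^{(F)}_t$ (it can only employ labour it can pay for). It sets the price $p_{t+1}=\phi_t((L^{(D)}_{t+1})^\gamma)$. (2) The household supplies $L^{(S)}_{t+1}=\frac{\beta}{\alpha+\beta}L_f$. (3) Transacted labour is $L^{(M)}_{t+1}=\min\{L^{(D)}_{t+1},L^{(S)}_{t+1}\}$. (4) The jelly supply is $J^{(S)}_{t+1}=(L^{(M)}_{t+1})^\gamma$. (5) The household demands $J^{(D)}_{t+1}=\min\{\frac{\beta}{\alpha+\beta}\frac{L_f}{p_{t+1}},\frac{m^{(H)}_t}{p_{t+1}}\}$. (6) Transacted jelly is $J^{(M)}_{t+1}=\min\{J^{(D)}_{t+1},J^{(S)}_{t+1}\}$.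 (7) The money holdings update as $m^{(F)}_{t+1}=m^{(F)}_t+p_{t+1}J^{(M)}_{t+1}-L^{(M)}_{t+1}$ and $m^{(H)}_{t+1}=m^{(H)}_t-p_{t+1}J^{(M)}_{t+1}+L^{(M)}_{t+1}$. (8) The firm updates $(z,\zeta)$. The economic state at time $t$ is $e_t=(L^{(D)}_t,L^{(S)}_t,J^{(D)}_t,J^{(S)}_t,p_t)$. The economic equilibrium is the unique economic state in which both markets clear, $e_E=(L_E,L_E,L_E^\gamma,L_E^\gamma,p_E)$, with $L_E=\frac{\beta}{\alpha+\beta}L_f$ and $p_E=L_E^{1-\gamma}$. Reaching the economic equilibrium means $e_t=e_E$ for some $t$; in particular the firm must employ $L_E$ units of labour at some time. *)

From Stdlib Require Import Reals Lra.
Open Scope R_scope.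

(* Real power x^y for x >= 0; convention 0^y = 0 (the model only uses
   nonnegative bases; Stdlib's Rpower has Rpower 0 y = 1, hence the guard). *)
Definition rpow (x y : R) : R := if Rle_dec x 0 then 0 else Rpower x y.

Definition phi (z zeta J : R) : R := z / rpow J zeta.

Definition labour_demand (gamma Lf mF z zeta L : R) : Prop :=
  (0 <= L <= Lf /\ L <= mF) /\
  forall L', 0 <= L' <= Lf -> L' <= mF ->
    Rabs (rpow L gamma * phi z zeta (rpow L gamma) - L)
      <= Rabs (rpow L' gamma * phi z zeta (rpow L' gamma) - L').

Definition LE (alpha beta Lf : R) : R := beta / (alpha + beta) * Lf.
Definition pE (alpha beta gamma Lf : R) : R := rpow (LE alpha beta Lf) (1 - gamma).

Definition econ_equilibrium (alpha beta gamma Lf : R) : R * R * R * R * R :=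
  (LE alpha beta Lf, LE alpha beta Lf,
   rpow (LE alpha beta Lf) gamma, rpow (LE alpha beta Lf) gamma,
   pE alpha beta gamma Lf).

(* One period t -> t+1 of the model (steps (1)-(7)); step (8), the update of
   (z, zeta), is arbitrary: z and zeta are arbitrary sequences. *)
Definition jelly_step (alpha beta gamma Lf : R)
  (z zeta LD LS JD JS p LM JM mH mF : nat -> R) (t : nat) : Prop :=
  labour_demand gamma Lf (mF t) (z t) (zeta t) (LD (S t)) /\
  p (S t) = phi (z t) (zeta t) (rpow (LD (S t)) gamma) /\
  LS (S t) = beta / (alpha + beta) * Lf /\
  LM (S t) = Rmin (LD (S t)) (LS (S t)) /\
  JS (S t) = rpow (LM (S t)) gamma /\
  JD (S t) = Rmin (beta / (alpha + beta) * Lf / p (S t)) (mH t / p (S t)) /\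
  JM (S t) = Rmin (JD (S t)) (JS (S t)) /\
  mF (S t) = mF t + p (S t) * JM (S t) - LM (S t) /\
  mH (S t) = mH t - p (S t) * JM (S t) + LM (S t).

(* Money is conserved by every period, and the firm can only hire labour it
   can pay for: L^(D)_(t+1) <= m^(F)_t <= m^(H)_t + m^(F)_t = M < L_E, so the
   firm never employs L_E. Only m^(H) >= 0 is needed, not the sign conditions
   on the parameters. *)
From Stdlib Require Import Reals Lra.
Open Scope R_scope.

Lemma labour_demand_le_money (gamma Lf mF z zeta L : R) :
  labour_demand gamma Lf mF z zeta L -> L <= mF.
Proof. intros [[_ HLm] _]. exact HLm. Qed.

Section JellyDynamics.

Variables (alpha beta gamma Lf : R) (z zeta LD LS JD JS p LM JM mH mF : nat -> R).

Hypothesis step :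
  forall t, jelly_step alpha beta gamma Lf z zeta LD LS JD JS p LM JM mH mF t.

Lemma jelly_money_succ (t : nat) : mH (S t) + mF (S t) = mH t + mF t.
Proof. destruct (step t) as (_ & _ & _ & _ & _ & _ & _ & HF & HH). lra. Qed.

Lemma jelly_money_const (t : nat) : mH t + mF t = mH O + mF O.
Proof.
  induction t as [|t IH]; [reflexivity|].
  rewrite jelly_money_succ. exact IH.
Qed.

Lemma jelly_labour_demand_le_money (t : nat) : LD (S t) <= mH O + mF O - mH t.
Proof.
  destruct (step t) as [HLD _].
  apply labour_demand_le_money in HLD.
  pose proof (jelly_money_const t). lra.
Qed.

End JellyDynamics.

Theorem proposition5 (alpha beta gamma Lf : R)
  (z zeta LD LS JD JS p LM JM mH mF : nat -> R) :
  0 < alpha -> 0 < beta -> 0 < gamma < 1 -> 0 < Lf ->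
  (forall t, 0 <= mH t /\ 0 <= mF t) ->
  (forall t, jelly_step alpha beta gamma Lf z zeta LD LS JD JS p LM JM mH mF t) ->
  mH O + mF O < LE alpha beta Lf ->
  forall t : nat,
    (LD (S t), LS (S t), JD (S t), JS (S t), p (S t))
      <> econ_equilibrium alpha beta gamma Lf.
Proof.
  intros _ _ _ _ Hmoney Hstep HM t Heq.
  injection Heq as HLD _ _ _ _.
  pose proof (jelly_labour_demand_le_money alpha beta gamma Lf
                  z zeta LD LS JD JS p LM JM mH mF Hstep t).
  destruct (Hmoney t) as [HmH _].
  lra.
Qed.
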